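(* Let $S,B\subseteq\{-1,1,*\}^X$ be binary hypothesis classes. For any $\varepsilon\ge0$ and $n\in\mathbb{Z}_{>0}$, $\mathsf{CompOL}_n(S,B,\varepsilon)\subseteq\mathsf{ReaOL}_n(\mathbf{A}_{S,B},\varepsilon)$; that is, any online learner solving comparative online learning for $(S,B)$ also solves realizable online learning for $\mathbf{A}_{S,B}$ with the same $\varepsilon$.
   Context: Agreement hypotheses: for $s,b:X\to\{-1,1,*\}$, $\mathbf{a}_{s,b}(x)=s(x)$ if $s(x)=b(x)\in\{-1,1\}$, and $*$ otherwise; $\mathbf{A}_{S,B}=\{\mathbf{a}_{s,b}:s\in S,b\in B\}$. An online learner, for each $i=1,\dots,n$, given $(x_1,y_1),\dots,(x_{i-1},y_{i-1})$ and $x_i$, outputs a possibly random $\hat y_i\in\{-1,1\}$; $\mathsf{mistake}(L;(x_i,y_i)_{i=1}^n)=\frac1n\sum_i\Pr[\hat y_i\neq y_i]$ and $\mathsf{mistake}(h;(x_i,y_i)_{i=1}^n)=\frac1n\sum_i\mathbf{1}(h(x_i)\ne y_i)$. $\mathsf{ReaOL}_n(H,\varepsilon)$: online learners with $\mathsf{mistake}(L;\cdot)\le\varepsilon$ on every sequence with $y_i=h(x_i)$ for all $i$ for some $h\in H$. $\mathsf{CompOL}_n(S,B,\varepsilon)$: online learners with $\mathsf{mistake}(L;\cdot)\le\inf_{b\in B}\mathsf{mistake}(b;\cdot)+\varepsilon$ on every sequence with $y_i=s(x_i)$ for all $i$ for some $s\in S$. *)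

From HB Require Import structures.
From mathcomp Require Import all_boot all_order all_algebra.
From mathcomp Require Import all_classical all_reals.
From mathcomp Require Import constructive_ereal ereal.
Set Implicit Arguments. Unset Strict Implicit. Unset Printing Implicit Defensive.
Import Order.TTheory GRing.Theory Num.Theory.
Local Open Scope classical_set_scope.
Local Open Scope ring_scope.

(* Labels {-1,1,*}: Some true = 1, Some false = -1, None = * .
   A (partial) binary hypothesis on X is a map X -> option bool.
   Observed labels y_i are in {-1,1}, encoded as bool (true = 1). *)
Definition hyp (X : Type) := X -> option bool.

Definition agree (X : Type) (s b : hyp X) : hyp X := fun x =>
  match s x, b x with
  | Some u, Some v => if u == v then Some u else None
  | _, _ => None
  end.

Definition Aclass (X : Type) (S B : set (hyp X)) : set (hyp X) :=
  [set h | exists s b, S s /\ B b /\ h = agree s b].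

(* An online learner: given the history (x_1,y_1),...,(x_{i-1},y_{i-1}) and x_i,
   returns the probability that its (random) prediction hat y_i equals 1. *)
Definition learner (R : realType) (X : Type) := seq (X * bool) -> X -> R.

Definition is_learner (R : realType) (X : Type) (L : learner R X) : Prop :=
  forall hist x, 0 <= L hist x <= 1.

(* Pr[hat y <> y] when Pr[hat y = 1] = p *)
Definition err_prob (R : realType) (p : R) (y : bool) : R :=
  if y then 1 - p else p.

Definition mistakeL (R : realType) (X : Type) (n : nat) (L : learner R X)
  (t : n.-tuple (X * bool)) : R :=
  n%:R^-1 * \sum_(i < n) err_prob (L (take i t) (tnth t i).1) (tnth t i).2.

(* mistake(h; (x_i,y_i)_{i=1}^n) ; h(x_i) = * always counts as a mistake *)
Definition mistakeH (R : realType) (X : Type) (n : nat) (h : hyp X)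
  (t : n.-tuple (X * bool)) : R :=
  n%:R^-1 * \sum_(i < n) (h (tnth t i).1 != Some (tnth t i).2)%:R.

Definition labelled_by (X : Type) (n : nat) (h : hyp X) (t : n.-tuple (X * bool)) : Prop :=
  forall i : 'I_n, h (tnth t i).1 = Some (tnth t i).2.

Definition ReaOL (R : realType) (X : Type) (n : nat) (H : set (hyp X)) (eps : R)
  : set (learner R X) :=
  [set L | is_learner L /\
     forall t : n.-tuple (X * bool),
       (exists2 h, H h & labelled_by h t) -> mistakeL L t <= eps].

Definition CompOL (R : realType) (X : Type) (n : nat) (S B : set (hyp X)) (eps : R)
  : set (learner R X) :=
  [set L | is_learner L /\
     forall t : n.-tuple (X * bool),
       (exists2 s, S s & labelled_by s t) ->
       ((mistakeL L t)%:E <=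
          ereal_inf [set (@mistakeH R X n b t)%:E | b in B] + eps%:E)%E].

From HB Require Import structures.
From mathcomp Require Import all_boot all_order all_algebra.
From mathcomp Require Import all_classical all_reals.
From mathcomp Require Import constructive_ereal ereal.
Import Order.TTheory GRing.Theory Num.Theory.
Local Open Scope classical_set_scope.
Local Open Scope ring_scope.

(* A sequence realized by a_{s,b} is realized by s, so the comparative
   guarantee applies to it; it is also realized by b, so the comparator b
   makes no mistake and the benchmark inf_{b in B} mistake(b) is 0. *)

Lemma agree_Some {X : Type} {s b : hyp X} {x : X} {y : bool} :
  agree s b x = Some y -> s x = Some y /\ b x = Some y.
Proof.
rewrite /agree; case: (s x) => [u|] //; case: (b x) => [v|] //.
by case: eqP => // -> [->].
Qed.

Section Labelled.
Context {X : Type} {n : nat} {t : n.-tuple (X * bool)}.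

Lemma labelled_by_agree {s b : hyp X} :
  labelled_by (agree s b) t -> labelled_by s t /\ labelled_by b t.
Proof. by move=> lab; split=> i; case: (agree_Some (lab i)). Qed.

Lemma mistakeH_labelled (R : realType) {h : hyp X} :
  labelled_by h t -> mistakeH R h t = 0.
Proof. by move=> lab; rewrite /mistakeH big1 ?mulr0 // => i _; rewrite lab eqxx. Qed.

Lemma ereal_inf_mistakeH_le0 (R : realType) {B : set (hyp X)} {b : hyp X} :
  B b -> labelled_by b t ->
  (ereal_inf [set (mistakeH R b' t)%:E | b' in B] <= 0%:E)%E.
Proof.
by move=> Bb lab; rewrite -(mistakeH_labelled R lab); apply: ereal_inf_lbound; exists b.
Qed.

End Labelled.

Theorem lemma8p9 (R : realType) (X : Type) (S B : set (hyp X)) (eps : R) (n : nat) :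
  0 <= eps -> (0 < n)%N ->
  CompOL n S B eps `<=` ReaOL n (Aclass S B) eps.
Proof.
move=> _ _ L [learnerL compL]; split=> // t [_ [s [b [Ss [Bb ->]]]] lab].
have [labs labb] := labelled_by_agree lab.
have inf_le0 := ereal_inf_mistakeH_le0 R Bb labb.
have := le_trans (compL t (ex_intro2 _ _ s Ss labs)) (leeD2r eps%:E inf_le0).
by rewrite add0e lee_fin.
Qed.
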